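(* Let $V$ be a poset, $m$ a maximal node of $V$ of positive height, and let $U$ be a splitting of $V$ at $m$ with splitting map $\varphi$. Then $\dim U=\dim V$ and $\varphi(\min U)=\min V$.
   Context: $\dim$ of a poset is the supremum of lengths of chains; the height of a node $u$ is the dimension of $\{v: v\le u\}$. A poset map is an order-preserving map. Given a poset $V$ with a maximal node $m$ of positive height, a poset $U$ is a splitting of $V$ at $m$ if there exist a finite nonempty set $\mathcal M\subseteq\max U$ of nodes of positive height and a surjective poset map $\varphi:U\to V$ (called a splitting map) such that: (1) $\varphi^{-1}(m)=\mathcal M$ and $|\varphi^{-1}(v)|=1$ for all $v\neq m$; (2) whenever $\varphi(x')=x\le y$ with $x'\in U$, $x,y\in V$, there exists $y'\in U$ with $x'\le y'$ and $\varphi(y')=y$. *)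

From HB Require Import structures.
From mathcomp Require Import all_boot all_order.
From Stdlib Require Import ClassicalEpsilon.
Set Implicit Arguments. Unset Strict Implicit. Unset Printing Implicit Defensive.
Import Order.TTheory.
Local Open Scope order_scope.

(* Extended naturals: [Some k] is the natural k, [None] is +infinity. *)
Definition natinf := option nat.

Section Posets.
Context {disp : Order.disp_t} {T : porderType disp}.

Definition chain_len_in (A : T -> Prop) (n : nat) : Prop :=
  exists c : nat -> T,
    (forall i, (i < n)%N -> c i < c i.+1) /\ (forall i, (i <= n)%N -> A (c i)).

Definition is_dim_in (A : T -> Prop) (d : natinf) : Prop :=
  match d with
  | None => forall n, chain_len_in A n
  | Some k => (forall n, chain_len_in A n -> (n <= k)%N) /\
              (forall j, (forall n, chain_len_in A n -> (n <= j)%N) -> (k <= j)%N)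
  end.

(* The supremum always exists (classically); dim_in picks it. *)
Definition dim_in (A : T -> Prop) : natinf :=
  epsilon (inhabits None) (is_dim_in A).

Definition dim : natinf := dim_in (fun _ => True).

Definition height (u : T) : natinf := dim_in (fun v => v <= u).

Definition maximal (x : T) : Prop := forall y, x <= y -> y = x.
Definition minimal (x : T) : Prop := forall y, y <= x -> y = x.

End Posets.
Arguments dim {disp} T.

Definition splitting_map {d1 d2 : Order.disp_t} {V : porderType d1}
    {U : porderType d2} (m : V) (M : seq U) (phi : U -> V) : Prop :=
  M <> [::] /\ uniq M /\
  (forall x, x \in M -> maximal x /\ height x <> Some 0%N) /\
  {homo phi : x y / x <= y} /\
  (forall v, exists u, phi u = v) /\
  (forall x, phi x = m <-> x \in M) /\
  (forall x y, phi x = phi y -> phi x <> m -> x = y) /\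
  (forall (x' : U) (y : V), phi x' <= y -> exists y', x' <= y' /\ phi y' = y).

From mathcomp Require Import all_boot all_order.
From Stdlib Require Import ClassicalEpsilon FunctionalExtensionality PropExtensionality.
Import Order.TTheory.
Local Open Scope order_scope.

(* A splitting map is strictly monotone: two comparable points of a fibre
   must lie over m, and the points over m are maximal.  Hence it maps chains
   to chains of the same length, while the lifting property (2) together with
   surjectivity lifts every chain of V step by step to a chain of U; so both
   posets admit chains of exactly the same lengths.  A minimal point of U
   cannot lie over m (points over m have positive height), nor can a minimal
   point of V be m; away from m the map is injective, and (2) lifts
   [phi w <= phi u] to [w <= u], so minimal points correspond. *)

Lemma is_dim_in_uniq {disp} {T : porderType disp} (A : T -> Prop) d d' :
  is_dim_in A d -> is_dim_in A d' -> d = d'.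
Proof.
case: d => [k|]; case: d' => [j|] //=.
- move=> [chk leastk] [chj leastj]; congr Some; apply/eqP.
  by rewrite eqn_leq (leastk _ chj) (leastj _ chk).
- by move=> [chk _] all; have := chk _ (all k.+1); rewrite ltnn.
- by move=> all [chj _]; have := chj _ (all j.+1); rewrite ltnn.
Qed.

Lemma dim_in_eq {disp} {T : porderType disp} (A : T -> Prop) d :
  is_dim_in A d -> dim_in A = d.
Proof.
move=> Ad; exact: is_dim_in_uniq (epsilon_spec _ _ (ex_intro _ d Ad)) Ad.
Qed.

Lemma dim_in_ext {disp1 disp2} {T1 : porderType disp1} {T2 : porderType disp2}
    (A : T1 -> Prop) (B : T2 -> Prop) :
  (forall n, chain_len_in A n <-> chain_len_in B n) -> dim_in A = dim_in B.
Proof.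
move=> AB; rewrite /dim_in; congr epsilon.
apply: functional_extensionality => -[k|] /=; apply: propositional_extensionality.
- split=> -[bound least]; split.
  + by move=> n /AB; apply: bound.
  + by move=> j bj; apply: least => n /AB; apply: bj.
  + by move=> n /AB; apply: bound.
  + by move=> j bj; apply: least => n /AB; apply: bj.
- by split=> all n; apply/AB.
Qed.

Lemma height_minimal {disp} {T : porderType disp} (x : T) :
  minimal x -> height x = Some 0%N.
Proof.
move=> min_x; apply: dim_in_eq; split => // -[|n] // [c [c_lt c_le]].
have c0x := min_x _ (c_le 0%N isT).
by have := lt_le_trans (c_lt 0%N isT) (c_le 1%N isT); rewrite c0x ltxx.
Qed.

Lemma chain_len_in_homo {disp1 disp2} {T1 : porderType disp1}
    {T2 : porderType disp2} (f : T1 -> T2) (A : T1 -> Prop) (B : T2 -> Prop) n :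
  {homo f : x y / x < y} -> (forall x, A x -> B (f x)) ->
  chain_len_in A n -> chain_len_in B n.
Proof.
move=> f_lt fAB [c [c_lt c_in]]; exists (f \o c); split=> i i_n.
- exact: f_lt (c_lt i i_n).
- exact: fAB (c_in i i_n).
Qed.

Lemma lift_chain {disp1 disp2} {U : porderType disp1} {V : porderType disp2}
    {f : U -> V} :
  (forall v, exists u, f u = v) ->
  (forall x y, f x <= y -> exists y', x <= y' /\ f y' = y) ->
  forall {c : nat -> V} {n}, (forall i, (i < n)%N -> c i < c i.+1) ->
  exists c' : nat -> U,
    (forall i, (i < n)%N -> c' i < c' i.+1) /\
    (forall i, (i <= n)%N -> f (c' i) = c i).
Proof.
move=> f_surj f_lift c n; elim: n => [|n IH] c_lt.
  by have [u fu] := f_surj (c 0%N); exists (fun=> u); split => // -[].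
have [|c' [c'_lt fc']] := IH; first by move=> i i_n; apply/c_lt/ltnW.
have [|y [c'n_y fy]] := f_lift (c' n) (c n.+1); first by rewrite fc' ?ltW ?c_lt.
exists (fun i => if i == n.+1 then y else c' i); split=> i i_lt.
- rewrite (ltn_eqF i_lt) /= eqSS; have [->|i_n] := eqVneq i n.
  + rewrite lt_neqAle c'n_y andbT; apply/eqP => y_c'n.
    by have := c_lt n (ltnSn n); rewrite -fy -y_c'n fc' ?ltxx.
  + by rewrite /= c'_lt // ltn_neqAle i_n -ltnS.
- have [->//|i_n] := eqVneq i n.+1.
  by rewrite /= fc' // -ltnS ltn_neqAle i_n.
Qed.

Section SplittingMap.
Context {d1 d2 : Order.disp_t} {V : porderType d1} {U : porderType d2}.
Variables (m : V) (M : seq U) (phi : U -> V).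
Hypothesis phi_split : splitting_map m M phi.

Let M_maximal {x} : x \in M -> maximal x.
Proof. by case: phi_split => _ [_ [M_max _]] /M_max[]. Qed.

Let M_height {x} : x \in M -> height x <> Some 0%N.
Proof. by case: phi_split => _ [_ [M_max _]] /M_max[]. Qed.

Let phi_homo : {homo phi : x y / x <= y}.
Proof. by case: phi_split => _ [_ [_ []]]. Qed.

Let phi_surj v : exists u, phi u = v.
Proof. by case: phi_split => _ [_ [_ [_ []]]]. Qed.

Let phi_fibre_m x : phi x = m <-> x \in M.
Proof. by case: phi_split => _ [_ [_ [_ [_ []]]]]. Qed.

Let phi_inj_off_m x y : phi x = phi y -> phi x <> m -> x = y.
Proof. by case: phi_split => _ [_ [_ [_ [_ [_ [inj _]]]]]]; apply: inj. Qed.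

Let phi_lift x y : phi x <= y -> exists y', x <= y' /\ phi y' = y.
Proof. by case: phi_split => _ [_ [_ [_ [_ [_ [_ lift]]]]]]; apply: lift. Qed.

Lemma splitting_map_lt : {homo phi : x y / x < y}.
Proof.
move=> x y x_lt_y; rewrite lt_neqAle phi_homo ?ltW // andbT.
apply/eqP => phi_xy.
have y_x : y = x.
  have [/phi_fibre_m x_M|x_m] := eqVneq (phi x) m.
  - exact: M_maximal x_M _ (ltW x_lt_y).
  - by apply: phi_inj_off_m; rewrite -phi_xy; apply/eqP.
by rewrite y_x ltxx in x_lt_y.
Qed.

Lemma splitting_map_dim : dim U = dim V.
Proof.
apply: dim_in_ext => n; split.
- exact: chain_len_in_homo splitting_map_lt _.
- move=> [c [c_lt _]]; have [c' [c'_lt _]] := lift_chain phi_surj phi_lift c_lt.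
  by exists c'.
Qed.

Lemma splitting_map_minimal u : minimal u -> minimal (phi u).
Proof.
move=> min_u v v_le.
have [/phi_fibre_m u_M|u_m] := eqVneq (phi u) m.
  by case: (M_height u_M); apply: height_minimal.
have [w phi_w] := phi_surj v.
have [|y [w_y phi_yu]] := phi_lift w (phi u); first by rewrite phi_w.
have y_u : y = u by apply: phi_inj_off_m; rewrite phi_yu //; apply/eqP.
by rewrite -phi_w (min_u w) // -y_u.
Qed.

Hypothesis m_height : height m <> Some 0%N.

Lemma splitting_map_minimal_lift v :
  minimal v -> exists u, minimal u /\ phi u = v.
Proof.
move=> min_v; have [u phi_u] := phi_surj v; exists u; split => // w w_u.
have v_m : v <> m by move=> v_m; apply: m_height; rewrite -v_m height_minimal.
have phi_wu : phi w = phi u by rewrite phi_u; apply: min_v; rewrite -phi_u phi_homo.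
by apply: phi_inj_off_m; rewrite phi_wu phi_u.
Qed.

End SplittingMap.

Theorem lemma4p4 (d1 d2 : Order.disp_t) (V : porderType d1) (U : porderType d2)
    (m : V) (M : seq U) (phi : U -> V) :
  maximal m -> height m <> Some 0%N ->
  splitting_map m M phi ->
  dim U = dim V /\
  (forall u : U, minimal u -> minimal (phi u)) /\
  (forall v : V, minimal v -> exists u : U, minimal u /\ phi u = v).
Proof.
move=> _ m_height phi_split; split; last split.
- exact: splitting_map_dim phi_split.
- exact: splitting_map_minimal phi_split.
- exact: splitting_map_minimal_lift phi_split m_height.
Qed.
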